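(* In a PL+C model, if $\sum_{i\in\mathcal U}p_i\ge\alpha k$ for some $\alpha>1$, then $$\sum_{C\subseteq\mathcal U,\ |C|=k}\Pr_C(C)\le\frac{(\alpha e^{1-\alpha})^k}{1-(\alpha e^{1-\alpha})^k}.$$
   Context: Universe $\mathcal U=\{1,\dots,n\}$, integer $k\le n$, consideration probabilities $p_i\in(0,1]$. $\Pr_C(C)$ is the probability of consideration set $C$ when each item is included independently with probability $p_i$, conditioned on $|C|\ge k$: $\Pr_C(C)=\frac{1}{z_{k,p}}\prod_{h\in C}p_h\prod_{h\notin C}(1-p_h)$ for $|C|\ge k$, where $z_{k,p}=\sum_{|C|\ge k}\prod_{h\in C}p_h\prod_{h\notin C}(1-p_h)$, and $\Pr_C(C)=0$ if $|C|<k$. *)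

From mathcomp Require Import all_boot all_order all_algebra.
From mathcomp Require Import all_classical all_reals all_analysis.
Set Implicit Arguments. Unset Strict Implicit. Unset Printing Implicit Defensive.
Import Order.TTheory GRing.Theory Num.Theory.
Local Open Scope ring_scope.

(* Universe U = {1..n} is represented by 'I_n. *)
Definition set_weight (R : realType) (n : nat) (p : 'I_n -> R) (C : {set 'I_n}) : R :=
  (\prod_(h in C) p h) * (\prod_(h in ~: C) (1 - p h)).

Definition z_const (R : realType) (n k : nat) (p : 'I_n -> R) : R :=
  \sum_(C : {set 'I_n} | (k <= #|C|)%N) set_weight p C.

Definition PrC (R : realType) (n k : nat) (p : 'I_n -> R) (C : {set 'I_n}) : R :=
  if (k <= #|C|)%N then set_weight p C / z_const k p else 0.

From mathcomp Require Import all_boot all_order all_algebra.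
From mathcomp Require Import all_classical all_reals all_analysis.
From mathcomp Require Import lra.

Set Implicit Arguments.
Unset Strict Implicit.
Unset Printing Implicit Defensive.
Import Order.TTheory GRing.Theory Num.Theory.
Local Open Scope ring_scope.

(* A Chernoff bound for the lower tail of |C|.  The weights of sets with
   |C| <= k, scaled by t^k with t = 1/alpha <= 1, are dominated by the
   generating function \sum_C w(C) t^|C| = \prod_i (p_i t + 1 - p_i)
   <= exp((t - 1) \sum_i p_i), which gives the bound beta^k with
   beta = alpha e^(1 - alpha) < 1.  The same bound controls both the mass
   of the sets of size exactly k and the mass 1 - z_{k,p} of the sets of
   size below k, whence the ratio beta^k / (1 - beta^k). *)

Lemma ler_sum_subpred (R : numDomainType) (I : Type) (r : seq I)
    (P Q : pred I) (F : I -> R) :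
  (forall i, P i -> Q i) -> (forall i, Q i -> 0 <= F i) ->
  \sum_(i <- r | P i) F i <= \sum_(i <- r | Q i) F i.
Proof.
move=> PQ F_ge0; rewrite [X in _ <= X](bigID P) /=.
have -> : \sum_(i <- r | Q i && P i) F i = \sum_(i <- r | P i) F i.
  by apply: eq_bigl => i; apply/andb_idl/PQ.
by rewrite lerDl sumr_ge0 // => i /andP[/F_ge0].
Qed.

Lemma mulr_expR1B_lt1 (R : realType) (a : R) : a != 1 -> a * expR (1 - a) < 1.
Proof.
move=> a_neq1; have := expR_gt1Dx (x := a - 1).
rewrite subr_eq0 => /(_ a_neq1); rewrite addrC subrK => lt_a.
rewrite -(ltr_pM2r (expR_gt0 (a - 1))) -mulrA -expRD addrA subrK subrr.
by rewrite expR0 mulr1 mul1r.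
Qed.

Section SetWeight.
Variables (R : realType) (n : nat) (p : 'I_n -> R).

Lemma sum_set_weightX (t : R) :
  \sum_(C : {set 'I_n}) set_weight p C * t ^+ #|C|
    = \prod_(i < n) (p i * t + (1 - p i)).
Proof.
rewrite bigA_distr; apply: eq_bigr => C _.
rewrite /set_weight [RHS](bigID (mem C)) /= mulrAC; congr (_ * _).
  by rewrite -prodr_const -big_split; apply: eq_bigr => i ->.
by apply: eq_big => i; rewrite finset.in_setC // => /negbTE ->.
Qed.

Lemma sum_set_weight : \sum_(C : {set 'I_n}) set_weight p C = 1.
Proof.
transitivity (\sum_(C : {set 'I_n}) set_weight p C * 1 ^+ #|C|).
  by apply: eq_bigr => C _; rewrite expr1n mulr1.
by rewrite sum_set_weightX big1 // => i _; rewrite mulr1 addrC subrK.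
Qed.

Lemma z_constE (k : nat) :
  z_const k p = 1 - \sum_(C : {set 'I_n} | (#|C| < k)%N) set_weight p C.
Proof.
rewrite -sum_set_weight (bigID (fun C : {set 'I_n} => (#|C| < k)%N)) /=.
by rewrite addrC addrK; apply: eq_bigl => C; rewrite leqNgt.
Qed.

Lemma sum_PrC_card_eq (k : nat) :
  \sum_(C : {set 'I_n} | #|C| == k) PrC k p C
    = (\sum_(C : {set 'I_n} | #|C| == k) set_weight p C) / z_const k p.
Proof. by rewrite mulr_suml; apply: eq_bigr => C /eqP <-; rewrite /PrC leqnn. Qed.

Hypothesis p01 : forall i, 0 <= p i <= 1.

Lemma set_weight_ge0 (C : {set 'I_n}) : 0 <= set_weight p C.
Proof.
by apply: mulr_ge0; apply: prodr_ge0 => i _; case/andP: (p01 i); rewrite ?subr_ge0.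
Qed.

Lemma sum_set_weight_card_leX (k : nat) (t : R) : 0 <= t <= 1 ->
  (\sum_(C : {set 'I_n} | (#|C| <= k)%N) set_weight p C) * t ^+ k
    <= \prod_(i < n) (p i * t + (1 - p i)).
Proof.
case/andP=> t_ge0 t_le1; rewrite -sum_set_weightX mulr_suml.
apply: (@le_trans _ _ (\sum_(C : {set 'I_n} | (#|C| <= k)%N) set_weight p C * t ^+ #|C|)).
  apply: ler_sum => C /subnKC <-; rewrite exprD ler_wpM2l ?set_weight_ge0 //.
  by rewrite ler_piMr ?exprn_ge0 ?exprn_ile1.
apply: ler_sum_subpred => // C _.
by rewrite mulr_ge0 ?set_weight_ge0 ?exprn_ge0.
Qed.

Lemma prod_weight_generating_le_expR (t : R) : 0 <= t ->
  \prod_(i < n) (p i * t + (1 - p i)) <= expR ((t - 1) * \sum_(i < n) p i).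
Proof.
move=> t_ge0; rewrite mulr_sumr expR_sum; apply: ler_prod => i _.
have /andP[p_ge0 p_le1] := p01 i; apply/andP; split.
  by rewrite addr_ge0 ?mulr_ge0 ?subr_ge0.
by apply: le_trans (expR_ge1Dx _); nra.
Qed.

Lemma sum_set_weight_card_le (k : nat) (alpha : R) :
  1 <= alpha -> alpha * k%:R <= \sum_(i < n) p i ->
  \sum_(C : {set 'I_n} | (#|C| <= k)%N) set_weight p C
    <= (alpha * expR (1 - alpha)) ^+ k.
Proof.
move=> alpha_ge1 sum_p_ge; have alpha_gt0 : 0 < alpha by lra.
have t_gt0 : 0 < alpha^-1 by rewrite invr_gt0.
have t_bounds : 0 <= alpha^-1 <= 1.
  by rewrite ltW //= invr_le1 ?unitf_gt0.
rewrite -(ler_pM2r (exprn_gt0 k t_gt0)).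
apply: le_trans (sum_set_weight_card_leX k t_bounds) _.
apply: le_trans (prod_weight_generating_le_expR (ltW t_gt0)) _.
rewrite -exprMn mulrAC mulfV ?gt_eqF // mul1r -expRM_natl ler_expR.
have t_sub1 : alpha^-1 - 1 = (1 - alpha) / alpha.
  by rewrite mulrBl mulfV ?gt_eqF // mul1r.
by rewrite t_sub1 mulrAC ler_pdivrMr //; nra.
Qed.

End SetWeight.

Theorem lemma4 (R : realType) (n k : nat) (p : 'I_n -> R) (alpha : R) :
  (1 <= k)%N -> (k <= n)%N ->
  (forall i, 0 < p i <= 1) ->
  1 < alpha ->
  alpha * k%:R <= \sum_(i < n) p i ->
  \sum_(C : {set 'I_n} | #|C| == k) PrC k p C
    <= (alpha * expR (1 - alpha)) ^+ k / (1 - (alpha * expR (1 - alpha)) ^+ k).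
Proof.
move=> k_gt0 _ p_bounds alpha_gt1 sum_p_ge.
have p01 i : 0 <= p i <= 1 by case/andP: (p_bounds i) => /ltW -> ->.
have alpha_gt0 : 0 < alpha by apply: lt_trans alpha_gt1.
have beta_ge0 : 0 <= alpha * expR (1 - alpha) by rewrite mulr_ge0 ?expR_ge0 ?ltW.
have beta_lt1 : alpha * expR (1 - alpha) < 1 by rewrite mulr_expR1B_lt1 ?gt_eqF.
set b := (alpha * expR (1 - alpha)) ^+ k.
have b_lt1 : b < 1 by rewrite exprn_ilt1 // -lt0n.
have tail_le_b := sum_set_weight_card_le p01 (ltW alpha_gt1) sum_p_ge.
have card_eq_le_b : \sum_(C : {set 'I_n} | #|C| == k) set_weight p C <= b.
  apply: le_trans tail_le_b; apply: ler_sum_subpred => [C /eqP -> //|C _].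
  exact: set_weight_ge0.
have z_ge : 1 - b <= z_const k p.
  rewrite z_constE lerD2l lerN2; apply: le_trans tail_le_b.
  apply: ler_sum_subpred => [C /ltnW //|C _]; exact: set_weight_ge0.
have one_sub_b_gt0 : 0 < 1 - b by rewrite subr_gt0.
rewrite sum_PrC_card_eq ler_pdivrMr ?(lt_le_trans one_sub_b_gt0) //.
rewrite mulrAC ler_pdivlMr //; apply: ler_pM => //.
  by apply: sumr_ge0 => C _; exact: set_weight_ge0.
exact: ltW.
Qed.
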